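(* Let $N\ge 1$ and $p_0,p_1,\ldots,p_{N-1}\in\mathbb{N}$, let $k$ be a nonnegative integer and $x$ a nonnegative integer. Then $$\mathbf{d}_{p_0p_1\cdots p_{N-1}}(k,x)=\sum_{h=0}^{N-1}\mathbf{d}_{p_h}\!\left(k,\ \frac{x}{\left(\prod_{m=0}^{h-1}p_m\right)^{k+1}\left(\prod_{n=h+1}^{N-1}p_n\right)^{k}}\right)\prod_{j=0}^{h-1}p_j ,$$ where empty products equal $1$.
   Context: For an integer $p\ge 2$, an integer $k\ge 0$ and a real number $x\ge 0$, the digit function is $\mathbf{d}_p(k,x)=\lfloor x/p^k\rfloor-p\lfloor x/p^{k+1}\rfloor$ (for integer $x$ this is the $k$-th digit of $x$ in radix $p$); by convention $\mathbf{d}_1(k,x)=0$ for all $k,x$. *)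

From mathcomp Require Import all_boot all_order all_algebra.
Set Implicit Arguments. Unset Strict Implicit. Unset Printing Implicit Defensive.
Import Order.TTheory GRing.Theory Num.Theory.
Local Open Scope ring_scope.

(* Defined for x in an archimedean field R
   (e.g. the reals); the value for p = 0 is not meaningful (set to 0) and
   is excluded by the hypotheses of the theorem. *)
Definition digit {R : archiNumFieldType} (p k : nat) (x : R) : int :=
  if (2 <= p)%N then
    Num.floor (x / (p%:R ^+ k)) - (p%:Z) * Num.floor (x / (p%:R ^+ k.+1))
  else 0.

From mathcomp Require Import all_boot all_order all_algebra.
From mathcomp Require Import all_classical all_reals.
From mathcomp Require Import zify ring.
Import Order.TTheory GRing.Theory Num.Theory.
Local Open Scope ring_scope.

(* With z = x div (p_0...p_(N-1))^k, the left-hand side is z mod p_0...p_(N-1),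
   and the h-th summand is the h-th digit of z in the mixed radix
   (p_0, ..., p_(N-1)) times its place value p_0...p_(h-1); the identity is
   the mixed-radix expansion of z mod p_0...p_(N-1), which telescopes. *)

Lemma floor_divn (R : archiNumFieldType) (a b : nat) : (0 < b)%N ->
  Num.floor (a%:R / b%:R : R) = (a %/ b)%N%:Z.
Proof.
move=> b_gt0; apply: floor_def.
have b_pos : (0 : R) < b%:R by rewrite ltr0n.
rewrite ler_pdivlMr // ltr_pdivrMr // -[_ + 1]PoszD addn1.
rewrite !pmulrn -!natrM ler_nat ltr_nat.
by rewrite leq_divM ltn_ceil.
Qed.

Lemma digit_divn (R : archiNumFieldType) (p k x m : nat) :
    (0 < p)%N -> (0 < m)%N ->
  digit p k (x%:R / m%:R : R) =
  (x %/ (m * p ^ k))%N%:Z - p%:Z * (x %/ (m * p ^ k.+1))%N%:Z.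
Proof.
move=> p_gt0 m_gt0; rewrite /digit; case: ifP => [_ | p_lt2].
  rewrite -!mulrA -!invfM -!natrX -!natrM !floor_divn //;
    by rewrite muln_gt0 m_gt0 expn_gt0 p_gt0.
have -> : p = 1%N by lia.
by rewrite !exp1n muln1 mul1r subrr.
Qed.

Lemma digit_nat (R : archiNumFieldType) (p k x : nat) : (0 < p)%N ->
  digit p k (x%:R : R) = (x %/ p ^ k)%N%:Z - p%:Z * (x %/ p ^ k.+1)%N%:Z.
Proof.
move=> p_gt0; have -> : (x%:R : R) = x%:R / 1%:R by rewrite divr1.
by rewrite digit_divn // !mul1n.
Qed.

Lemma Posz_modn (m d : nat) :
  (m %% d)%N%:Z = m%:Z - (d * (m %/ d))%N%:Z.
Proof. by rewrite {2}(divn_eq m d) PoszD PoszM; ring. Qed.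

Lemma modn_prod_mixed_radix (p : nat -> nat) (N z : nat) :
  (z %% \prod_(i < N) p i)%N%:Z =
  \sum_(h < N) ((z %/ \prod_(i < h) p i)%N%:Z
                - (p h)%:Z * (z %/ \prod_(i < h.+1) p i)%N%:Z)
               * (\prod_(i < h) p i)%N%:Z.
Proof.
pose f h := (\prod_(i < h) p i * (z %/ \prod_(i < h) p i))%N%:Z.
have f0 : f 0%N = z%:Z by rewrite /f big_ord0 mul1n divn1.
have -> : (z %% \prod_(i < N) p i)%N%:Z = f 0%N - f N by rewrite f0 Posz_modn.
rewrite -opprB -(telescope_sumr f (leq0n N)) big_mkord -sumrN.
apply: eq_bigr => h _; rewrite /f big_ord_recr /= !PoszM.
ring.
Qed.

Section PositiveFactors.

Variables (p : nat -> nat) (N : nat).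
Hypothesis p_gt0 : forall i, (i < N)%N -> (0 < p i)%N.

Local Notation P h := (\prod_(i < h) p i)%N.
Local Notation Q h := (\prod_(h.+1 <= n < N) p n)%N.

Lemma prefix_prod_gt0 h : (h <= N)%N -> (0 < P h)%N.
Proof.
by move=> hN; apply: prodn_gt0 => i; apply: p_gt0 (leq_trans (ltn_ord i) hN).
Qed.

Lemma suffix_prod_gt0 h : (0 < Q h)%N.
Proof.
rewrite big_seq; apply: prodn_cond_gt0 => i.
by rewrite mem_index_iota => /andP[_]; apply: p_gt0.
Qed.

Lemma prod_split_at h : (h < N)%N -> P N = (P h * p h * Q h)%N.
Proof.
move=> hN; rewrite -!(big_mkord xpredT p) (big_cat_nat (leq0n h) (ltnW hN)) /=.
by rewrite (big_ltn hN) mulnA.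
Qed.

Lemma digit_factor (R : archiNumFieldType) (k x h : nat) : (h < N)%N ->
  digit (p h) k (x%:R / (P h ^ k.+1 * Q h ^ k)%N%:R : R) =
  (x %/ P N ^ k %/ P h)%N%:Z - (p h)%:Z * (x %/ P N ^ k %/ P h.+1)%N%:Z.
Proof.
move=> hN; rewrite digit_divn ?p_gt0 //; last first.
  by rewrite muln_gt0 !expn_gt0 suffix_prod_gt0 prefix_prod_gt0 ?orbT // ltnW.
have P_succ : P h.+1 = (P h * p h)%N by rewrite big_ord_recr.
have -> : (P h ^ k.+1 * Q h ^ k * p h ^ k = P N ^ k * P h)%N.
  by rewrite (prod_split_at _ hN) !expnMn expnS; ring.
have -> : (P h ^ k.+1 * Q h ^ k * p h ^ k.+1 = P N ^ k * P h.+1)%N.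
  by rewrite (prod_split_at _ hN) P_succ !expnMn !expnS; ring.
by rewrite !divnMA.
Qed.

End PositiveFactors.

Arguments prefix_prod_gt0 {p N}.
Arguments digit_factor {p N}.

Theorem mainTheorem1 (R : realType) (N : nat) (p : nat -> nat) (k x : nat) :
  (1 <= N)%N ->
  (forall i, (i < N)%N -> (0 < p i)%N) ->
  digit (\prod_(i < N) p i)%N k (x%:R : R) =
  \sum_(h < N)
     digit (p h) k
       ((x%:R : R) / (((\prod_(m < h) p m) ^ k.+1 *
                       (\prod_(h.+1 <= n < N) p n) ^ k)%N)%:R)
     * ((\prod_(j < h) p j)%N)%:Z.
Proof.
move=> _ p_gt0.
rewrite digit_nat; last exact: prefix_prod_gt0 p_gt0 N (leqnn N).
rewrite expnSr divnMA -PoszM -Posz_modn modn_prod_mixed_radix.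
by apply: eq_bigr => -[h hN] _ /=; rewrite (digit_factor p_gt0).
Qed.
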